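(* Let $\mathcal N=\{N_1,\ldots,N_\ell\}$ be a family of $k$-sets satisfying properties (i) and (ii) below with $\ell\ge4$, and fix any run of the decomposition process described in the context, with its stages $0,\ldots,t$, numbers $\ell_0\ge\cdots\ge\ell_t$ and kernel vertices $a_i^{(s)}$. Let $0\le j\le t$, let $1\le i\le \ell_j$, and let $Y\subseteq N_i$ with $|Y|\le j$. Then there exists a $3$-element set $C\subseteq \bigl(N_i\cup\{a_i^{(0)},\ldots,a_i^{(j)}\}\bigr)\setminus Y$ such that $C\cap (V\setminus N_r)\ne\varnothing$ for every $r=1,\ldots,\ell$.
   Context: Setting: $k\ge3$, $\mathcal N=\{N_1,\dots,N_\ell\}$ a family of $k$-subsets, $V=\bigcup N_i$, $n=|V|$, $m=n-k$, satisfying (i) $\bigcap_{i}N_i=\varnothing$ but $\bigcap_{j\ne i}N_j\ne\varnothing$ for all $i$; (ii) every $S\subseteq V$ with $|S|\ge k+1$ contains a $3$-set $T$ not contained in any $N_i$. Assume $\ell\ge4$. Decomposition process: Stage $0$: $\ell_0=\ell$, $\mathcal N^{(0)}=\mathcal N$; for each $i\le\ell_0$ choose $a_i^{(0)}\in\bigcap_{r\ne i}N_r$; kernel $A^{(0)}=\{a_1^{(0)},\dots,a_{\ell_0}^{(0)}\}$. Having defined stages $0,\dots,j$ with $\mathcal N^{(j)}$ consisting of (truncations of) $N_1,\dots,N_{\ell_j}$, $\ell_j\ge4$, and kernels $A^{(0)},\dots,A^{(j)}$, consider the remainder family $R^{(j)}=\{N_r\setminus\bigcup_{s\le j}A^{(s)}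 : 1\le r\le \ell_j\}$, which has empty intersection. If every subfamily of $R^{(j)}$ that is minimal with respect to having empty intersection has only $2$ or $3$ members, stop and set $t=j$. Otherwise choose such a minimal subfamily with at least $4$ members; after reindexing the sets of $\mathcal N$ we may assume it consists of the truncations $N_r^{(j+1)}=N_r\setminus\bigcup_{s\le j}A^{(s)}$, $r=1,\dots,\ell_{j+1}$, with $\ell_{j+1}\ge4$; for each $i\le\ell_{j+1}$ choose $a_i^{(j+1)}\in\bigcap_{r\le\ell_{j+1},r\ne i}N_r^{(j+1)}$ and set $A^{(j+1)}=\{a_1^{(j+1)},\dots,a_{\ell_{j+1}}^{(j+1)}\}$. Thus $\ell=\ell_0\ge\ell_1\ge\dots\ge\ell_t\ge4$, and ''$N_i\in\mathcal N^{(j)}$'' means $i\le\ell_j$. *)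

From mathcomp Require Import all_boot.
Set Implicit Arguments. Unset Strict Implicit. Unset Printing Implicit Defensive.

Section Defs.
Variables (T : finType) (l : nat).

(* V = union of the family N_1..N_l, indexed by 'I_l *)
Definition union_fam (N : 'I_l -> {set T}) : {set T} := \bigcup_(i < l) N i.

Definition icap (F : 'I_l -> {set T}) (Q : {set 'I_l}) : {set T} :=
  \bigcap_(r in Q) F r.

Definition min_empty_subfam (F : 'I_l -> {set T}) (Q : {set 'I_l}) : Prop :=
  icap F Q = set0 /\ forall i, i \in Q -> icap F (Q :\ i) != set0.

Definition prop_i (N : 'I_l -> {set T}) : Prop :=
  icap N setT = set0 /\ forall i : 'I_l, icap N (setT :\ i) != set0.

Definition prop_ii (k : nat) (N : 'I_l -> {set T}) : Prop :=
  forall S : {set T}, S \subset union_fam N -> k.+1 <= #|S| ->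
    exists C : {set T}, [/\ C \subset S, #|C| = 3 &
                           forall i : 'I_l, ~~ (C \subset N i)].

(* Kernel at stage s: A^(s) = { a_i^(s) : i in P s }, where P s is the index
   set of the sets N_i belonging to N^(s) (i.e. "i <= l_s" after reindexing) *)
Definition kernel (P : nat -> {set 'I_l}) (a : nat -> 'I_l -> T) (s : nat)
  : {set T} := [set a s i | i in P s].

Definition kernels_below (P : nat -> {set 'I_l}) (a : nat -> 'I_l -> T) (j : nat)
  : {set T} := \bigcup_(s < j) kernel P a s.

Definition trunc (N : 'I_l -> {set T}) (P : nat -> {set 'I_l})
  (a : nat -> 'I_l -> T) (j : nat) : 'I_l -> {set T} :=
  fun r => N r :\: kernels_below P a j.

(* A run of the decomposition process with stages 0..t.
   P j = index set of N^(j) (size l_j); a j i = a_i^(j) for i in P j. *)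
Definition decomposition_run (N : 'I_l -> {set T}) (t : nat)
  (P : nat -> {set 'I_l}) (a : nat -> 'I_l -> T) : Prop :=
  [/\ P 0 = setT,
      (forall j i, j <= t -> i \in P j ->
         a j i \in icap (trunc N P a j) (P j :\ i)),
      (* stage j+1 (j < t): P (j+1) is a minimal empty-intersection subfamily
         of the remainder family R^(j), with at least 4 members *)
      (forall j, j < t ->
         [/\ P j.+1 \subset P j,
             min_empty_subfam (trunc N P a j.+1) (P j.+1)
           & 4 <= #|P j.+1| ]) &
      (* stopping rule at stage t: every minimal empty-intersection subfamily
         of R^(t) has 2 or 3 members *)
      (forall Q : {set 'I_l}, Q \subset P t -> min_empty_subfam (trunc N P a t.+1) Q ->
         #|Q| = 2 \/ #|Q| = 3)].

End Defs.

From mathcomp Require Import all_boot.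
From mathcomp Require Import zify.
Set Implicit Arguments.
Unset Strict Implicit.
Unset Printing Implicit Defensive.

(* The kernel vertex a_i^(s) lies in every truncation N_r^(s), r <> i, of the
   stage-s family, whose full intersection is empty; hence it avoids N_i and all
   earlier kernels.  So a_i^(0), ..., a_i^(j) are j+1 distinct vertices of V
   outside N_i, and (N_i u {a_i^(0), ..., a_i^(j)}) \ Y is a subset of V with at
   least k+1 elements.  Property (ii) yields a 3-set C in it contained in no N_r,
   i.e. meeting every V \ N_r. *)

Lemma card_setUD_disjoint (T : finType) (X A Y : {set T}) :
  [disjoint X & A] -> Y \subset X -> #|(X :|: A) :\: Y| = #|X| + #|A| - #|Y|.
Proof.
move=> disXA sYX; rewrite cardsD cardsU disjoint_setI0 // cards0 subn0.
by rewrite (setIidPr (subset_trans sYX (subsetUl X A))).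
Qed.

Lemma prop_ii_meets_complements (T : finType) (l k : nat) (N : 'I_l -> {set T})
    (S : {set T}) :
  prop_ii k N -> S \subset union_fam N -> k < #|S| ->
  exists C : {set T}, [/\ #|C| = 3, C \subset S &
    forall r, C :&: (union_fam N :\: N r) != set0].
Proof.
move=> propii sSV ltkS; have [C [sCS C3 CnotN]] := propii S sSV ltkS.
exists C; split=> // r; have /subsetPn [x xC xNr] := CnotN r.
apply/set0Pn; exists x; rewrite !inE xC xNr.
exact: (subsetP sSV) (subsetP sCS x xC).
Qed.

Section DecompositionRun.

Variables (T : finType) (l : nat) (N : 'I_l -> {set T}) (t : nat).
Variables (P : nat -> {set 'I_l}) (a : nat -> 'I_l -> T).
Hypothesis l_gt1 : 1 < l.
Hypothesis propi : prop_i N.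
Hypothesis run : decomposition_run N t P a.

Lemma run_index_subset s j : s <= j -> j <= t -> P j \subset P s.
Proof.
case: run => _ _ stage _; elim: j => [|j IHj] le_sj le_jt.
  by have -> : s = 0 by lia.
case: (leqP s j) => [le_sj' | lt_js]; last by have -> : s = j.+1 by lia.
have [sPP _ _] := stage j le_jt.
exact: subset_trans sPP (IHj le_sj' (ltnW le_jt)).
Qed.

Lemma icap_trunc_run s : s <= t -> icap (trunc N P a s) (P s) = set0.
Proof.
case: propi => capN _; case: run => P0 _ stage _; case: s => [|s] le_st.
  rewrite P0 -capN; apply: eq_bigr => r _.
  by rewrite /trunc /kernels_below big_ord0 setD0.
by have [_ [] ] := stage s le_st.
Qed.

Lemma run_index_card_gt1 s : s <= t -> 1 < #|P s|.
Proof.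
case: run => P0 _ stage _; case: s => [|s] le_st.
  by rewrite P0 cardsT card_ord.
by have [_ _ card4] := stage s le_st; lia.
Qed.

Section KernelVertex.

Variables (s : nat) (i : 'I_l).
Hypotheses (le_st : s <= t) (iPs : i \in P s).

Let a_trunc r : r \in P s :\ i -> a s i \in trunc N P a s r.
Proof. by case: run => _ choice _ _ /(bigcapP (choice s i le_st iPs)). Qed.

Let other_index : exists r, r \in P s :\ i.
Proof.
apply/set0Pn; rewrite -card_gt0.
by have := run_index_card_gt1 le_st; rewrite (cardsD1 i) iPs.
Qed.

Lemma kernel_vertex_in_union : a s i \in union_fam N.
Proof.
have [r rPi] := other_index; have := a_trunc rPi; rewrite inE => /andP [_ aNr].
by apply/bigcupP; exists r.
Qed.

Lemma kernel_vertex_notin_below : a s i \notin kernels_below P a s.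
Proof.
by have [r rPi] := other_index; have := a_trunc rPi; rewrite inE => /andP [].
Qed.

Lemma kernel_vertex_notin_N : a s i \notin N i.
Proof.
apply/negP => aNi; have := icap_trunc_run le_st.
move/setP/(_ (a s i)); rewrite in_set0 => /bigcapP; apply=> r rPs.
have [-> | ne_ri] := eqVneq r i.
  by rewrite inE aNi kernel_vertex_notin_below.
by apply: a_trunc; rewrite in_setD1 ne_ri.
Qed.

End KernelVertex.

Lemma kernel_vertex_neq s1 s2 i :
  s1 < s2 -> s2 <= t -> i \in P s2 -> a s1 i != a s2 i.
Proof.
move=> lt_s12 le_s2t iPs2.
have iPs1 : i \in P s1.
  exact: subsetP (run_index_subset (ltnW lt_s12) le_s2t) _ iPs2.
apply: contraNneq (kernel_vertex_notin_below le_s2t iPs2) => <-.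
by apply/bigcupP; exists (Ordinal lt_s12) => //; apply: imset_f.
Qed.

Section KernelVertices.

Variables (j : nat) (i : 'I_l).
Hypotheses (le_jt : j <= t) (iPj : i \in P j).

Let iP (s : 'I_j.+1) : i \in P s.
Proof. by apply: subsetP (run_index_subset _ le_jt) _ iPj; rewrite -ltnS. Qed.

Let le_t (s : 'I_j.+1) : s <= t.
Proof. by rewrite (leq_trans _ le_jt) // -ltnS. Qed.

Lemma card_kernel_vertices : #|[set a (nat_of_ord s) i | s : 'I_j.+1]| = j.+1.
Proof.
rewrite card_imset ?card_ord // => s1 s2 eq_a; apply/val_inj/eqP.
case: ltngtP => // [lt_s12 | lt_s21].
- by have := kernel_vertex_neq lt_s12 (le_t s2) (iP s2); rewrite eq_a eqxx.
- by have := kernel_vertex_neq lt_s21 (le_t s1) (iP s1); rewrite eq_a eqxx.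
Qed.

Lemma kernel_vertices_subset_union :
  [set a (nat_of_ord s) i | s : 'I_j.+1] \subset union_fam N.
Proof.
apply/subsetP => _ /imsetP [s _ ->].
exact: kernel_vertex_in_union (le_t s) (iP s).
Qed.

Lemma disjoint_kernel_vertices :
  [disjoint N i & [set a (nat_of_ord s) i | s : 'I_j.+1]].
Proof.
rewrite disjoint_sym disjoint_subset; apply/subsetP => _ /imsetP [s _ ->].
by rewrite inE (kernel_vertex_notin_N (le_t s) (iP s)).
Qed.

End KernelVertices.

End DecompositionRun.

Theorem lemma3 (T : finType) (k l : nat) (N : 'I_l -> {set T})
  (t : nat) (P : nat -> {set 'I_l}) (a : nat -> 'I_l -> T) :
  3 <= k ->
  4 <= l ->
  (forall i, #|N i| = k) ->
  prop_i N ->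
  prop_ii k N ->
  decomposition_run N t P a ->
  forall (j : nat) (i : 'I_l) (Y : {set T}),
    j <= t -> i \in P j -> Y \subset N i -> #|Y| <= j ->
    exists C : {set T},
      [/\ #|C| = 3,
          C \subset (N i :|: [set a (nat_of_ord s) i | s : 'I_j.+1]) :\: Y &
          forall r : 'I_l, C :&: (union_fam N :\: N r) != set0].
Proof.
move=> _ l_ge4 cardN propi propii run j i Y le_jt iPj sYN cardY.
have l_gt1 : 1 < l by lia.
have sAV := kernel_vertices_subset_union l_gt1 run le_jt iPj.
have disNA := disjoint_kernel_vertices l_gt1 propi run le_jt iPj.
have cardA := card_kernel_vertices l_gt1 run le_jt iPj.
apply: prop_ii_meets_complements propii _ _.
- by rewrite (subset_trans (subsetDl _ _)) // subUset sAV andbT /union_fam (bigcup_sup i).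
- by rewrite card_setUD_disjoint // cardN cardA; lia.
Qed.
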